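(* Let $\{f_i\}_{i\in I}$ be a Parseval frame for a Hilbert space $\mathbb H$. Then for every $J\subset I$ and every $f\in\mathbb H$, $$\sum_{i\in J}|\langle f,f_i\rangle|^2+\Big\|\sum_{i\in J^c}\langle f,f_i\rangle f_i\Big\|^2\ge\tfrac34\|f\|^2,$$ where $J^c=I\setminus J$.
   Context: A family $\{f_i\}_{i\in I}$ in a Hilbert space $\mathbb H$ is a Parseval frame if $\sum_{i\in I}|\langle f,f_i\rangle|^2=\|f\|^2$ for all $f\in\mathbb H$. *)

From HB Require Import structures.
From mathcomp Require Import all_boot all_order all_algebra.
From mathcomp Require Import all_classical all_reals all_analysis.
From mathcomp Require Import complex.
From mathcomp Require Import finmap.
Set Implicit Arguments.
Unset Strict Implicit.
Unset Printing Implicit Defensive.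
Import Order.TTheory GRing.Theory Num.Theory.
Local Open Scope ring_scope.
Local Open Scope classical_set_scope.

Definition fin_subsets {I : choiceType} : set_system {fset I} :=
  filter_from setT (fun A => [set B | (A `<=` B)%fset]).

(* [sum_over_to J x s] : the family (x i)_{i in J} is unconditionally summable
   with sum s, i.e. the net of finite partial sums  A |-> \sum_{i in A, i in J} x i
   (A ranging over finite subsets of I, ordered by inclusion) converges to s. *)
Definition sum_over_to {I : choiceType} {K : numFieldType} {V : normedModType K}
  (J : set I) (x : I -> V) (s : V) : Prop :=
  (fun A : {fset I} => \sum_(i <- A | `[< J i >]) x i) @ fin_subsets --> s.

(* ip is an inner product on H (linear in the first argument, conjugate
   symmetric) which induces the norm of H: <x,x> = ||x||^2.  (Positive
   definiteness follows from the last condition.) *)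
Definition is_inner_product (R : realType) (H : normedModType R[i])
  (ip : H -> H -> R[i]) : Prop :=
  [/\ forall (a : R[i]) (x y z : H), ip (a *: x + y) z = a * ip x z + ip y z,
      forall x y : H, ip y x = (ip x y)^*
    & forall x : H, ip x x = `|x| ^+ 2].

Definition parseval_frame (R : realType) (H : normedModType R[i])
  (ip : H -> H -> R[i]) (I : choiceType) (F : I -> H) : Prop :=
  forall f : H,
    sum_over_to [set: I] (fun i => (`|ip f (F i)| ^+ 2 : R[i]^o)) (`|f| ^+ 2).

(* Let c_i = <f, f_i>, split the Parseval identity as ||f||^2 = a + b with
   a = sum_{i in J} |c_i|^2 and b = sum_{i in J^c} |c_i|^2, and let
   g = sum_{i in J^c} c_i f_i.  Then <g, f> = b, so Cauchy-Schwarz gives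
   b^2 <= ||g||^2 ||f||^2, whence
   a + ||g||^2 >= a + b^2 / ||f||^2
               = 3/4 ||f||^2 + (b - ||f||^2 / 2)^2 / ||f||^2.
   The series defining g converges because a Parseval frame is a Bessel
   sequence: ||sum_{i in B} d_i f_i||^2 <= sum_{i in B} |d_i|^2 for every
   finite B, so its partial sums are Cauchy. *)
From HB Require Import structures.
From mathcomp Require Import all_boot all_order all_algebra.
From mathcomp Require Import ring lra.
From mathcomp Require Import all_classical all_reals all_analysis.
From mathcomp Require Import complex.
From mathcomp Require Import finmap.
Import Order.TTheory GRing.Theory Num.Theory.
Local Open Scope ring_scope.
Local Open Scope classical_set_scope.

Lemma fin_subsets_proper (I : choiceType) : ProperFilter (@fin_subsets I).
Proof.
apply: filter_from_proper; last by move=> A _; exists A => /=.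
apply: filter_from_filter; first by exists fset0.
move=> A B _ _; exists (A `|` B)%fset => // C /= ABC; split.
- exact: fsubset_trans (fsubsetUl _ _) ABC.
- exact: fsubset_trans (fsubsetUr _ _) ABC.
Qed.
#[export] Existing Instance fin_subsets_proper.

Lemma near_fin_subsets {I : choiceType} {P : {fset I} -> Prop} :
  (\forall B \near fin_subsets, P B) ->
  exists A, forall B, (A `<=` B)%fset -> P B.
Proof. by move=> [A _ PA]; exists A => B AB; exact: PA. Qed.

Lemma big_asboolT (V : zmodType) (I : choiceType) (x : I -> V) (A : {fset I}) :
  \sum_(i <- A | `[< [set: I] i >]) x i = \sum_(i <- A) x i.
Proof. by apply: eq_bigl => i; rewrite asboolT. Qed.

Lemma big_fsetD_split {V : zmodType} {I : choiceType} (x : I -> V) (P : pred I)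
    {A B : {fset I}} : (A `<=` B)%fset ->
  \sum_(i <- B | P i) x i =
    \sum_(i <- A | P i) x i +
    \sum_(i <- [fset j in B | j \notin A]%fset | P i) x i.
Proof.
move=> AB; rewrite (big_fsetIDcond _ (mem A)) /=; congr (_ + _).
apply: eq_fbigl_cond => i; rewrite !inE /=.
case: (boolP (i \in A)) => iA /=; first by rewrite (fsubsetP AB).
by rewrite andbF.
Qed.

Section NonnegativeSums.
Context {K : numFieldType} {I : choiceType} {w : I -> K}.
Hypothesis w_ge0 : forall i, 0 <= w i.

Lemma ler_sum_pred (P : pred I) (A : {fset I}) :
  \sum_(i <- A | P i) w i <= \sum_(i <- A) w i.
Proof. by rewrite big_mkcond /=; apply: ler_sum => i _; case: (P i). Qed.

Lemma ler_sum_fsubset (P : pred I) {A B : {fset I}} : (A `<=` B)%fset ->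
  \sum_(i <- A | P i) w i <= \sum_(i <- B | P i) w i.
Proof.
move=> AB; rewrite (big_fsetD_split _ _ AB) lerDl.
exact: sumr_ge0.
Qed.

Lemma sum_over_to_ub {s : K} : s \is Num.real ->
  sum_over_to [set: I] (w : I -> K^o) s ->
  forall A : {fset I}, \sum_(i <- A) w i <= s.
Proof.
move=> s_real ws A.
rewrite (real_leNgt (ger0_real (sumr_ge0 _ (fun i _ => w_ge0 i))) s_real).
apply/negP => sA.
have e_gt0 : 0 < \sum_(i <- A) w i - s by rewrite subr_gt0.
move: ws => /cvgrPdist_lt /(_ _ e_gt0) /near_fin_subsets [A1].
move=> /(_ (A1 `|` A)%fset (fsubsetUl _ _)).
rewrite big_asboolT /=.
have AAB := ler_sum_fsubset xpredT (fsubsetUr A1 A).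
rewrite distrC ger0_norm; last by rewrite subr_ge0 (le_trans _ AAB) // ltW.
by rewrite ltrD2r => /(le_lt_trans AAB); rewrite ltxx.
Qed.

End NonnegativeSums.

Lemma ge0_complex_real {R : realType} {z : R[i]} :
  0 <= z -> z = (complex.Re z)%:C%C.
Proof. by case: z => a b; rewrite lecE /= => /andP[/eqP -> _]. Qed.

Lemma gt0_complex_real {R : realType} {z : R[i]} :
  0 < z -> z = (complex.Re z)%:C%C /\ 0 < complex.Re z.
Proof. by case: z => a b; rewrite ltcE /= => /andP[/eqP -> ?]. Qed.

(* A monotone net of real numbers converges to its supremum. *)
Lemma sum_over_to_bounded {R : realType} {I : choiceType} {w : I -> R[i]}
    {P : set I} (M : R[i]) :
  (forall i, 0 <= w i) ->
  (forall A : {fset I}, \sum_(i <- A | `[< P i >]) w i <= M) ->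
  exists2 a : R[i], sum_over_to P (w : I -> R[i]^o) a & 0 <= a.
Proof.
move=> w_ge0 sM.
pose s (A : {fset I}) := \sum_(i <- A | `[< P i >]) w i.
pose r (A : {fset I}) := complex.Re (s A).
have sr A : s A = (r A)%:C%C by apply/ge0_complex_real/sumr_ge0.
have r_mono A B : (A `<=` B)%fset -> r A <= r B.
  move=> /(ler_sum_fsubset w_ge0 (fun i => `[< P i >])).
  by rewrite -/(s A) -/(s B) !sr lecR.
have r_sup : has_sup (range r).
  split; first by exists (r fset0), fset0.
  exists (complex.Re M) => _ [A _ <-].
  by move: (sM A); rewrite -/(s A) lecE => /andP[].
have r_ub A : r A <= sup (range r) by apply: sup_upper_bound => //; exists A.
exists (sup (range r))%:C%C.
  apply/cvgrPdist_lt => eps /gt0_complex_real [-> e_gt0].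
  have [_ [A0 _ <-] A0_sup] := sup_adherent e_gt0 r_sup.
  exists A0 => // B /= A0B.
  rewrite -/(s B) sr -rmorphB /= ger0_norm ?ler0c ?subr_ge0 // ltcR.
  by have := r_mono _ _ A0B; have := r_ub B; lra.
rewrite ler0c (le_trans _ (r_ub fset0)) // -ler0c -sr.
exact: sumr_ge0.
Qed.

Section InnerProduct.
Context {R : realType} {H : normedModType R[i]} {ip : H -> H -> R[i]}.
Hypothesis ip_inner : is_inner_product ip.

Lemma ipD x y z : ip (x + y) z = ip x z + ip y z.
Proof. by case: ip_inner => ipDZ _ _; rewrite -{1}[x]scale1r ipDZ mul1r. Qed.

Lemma ip0 z : ip 0 z = 0.
Proof. by apply/(addrI (ip 0 z)); rewrite -ipD !addr0. Qed.

Lemma ipZ a x z : ip (a *: x) z = a * ip x z.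
Proof.
by case: ip_inner => ipDZ _ _; rewrite -[a *: x]addr0 ipDZ ip0 addr0.
Qed.

Lemma ipB x y z : ip (x - y) z = ip x z - ip y z.
Proof. by rewrite ipD -scaleN1r ipZ mulN1r. Qed.

Lemma ipC x y : ip y x = (ip x y)^*.
Proof. by case: ip_inner. Qed.

Lemma ipxx x : ip x x = `|x| ^+ 2.
Proof. by case: ip_inner. Qed.

Lemma ip0r z : ip z 0 = 0.
Proof. by rewrite ipC ip0 conjC0. Qed.

Lemma ipBr x y z : ip z (x - y) = ip z x - ip z y.
Proof. by rewrite ipC ipB rmorphB /= -!ipC. Qed.

Lemma ipZr a x z : ip z (a *: x) = a^* * ip z x.
Proof. by rewrite ipC ipZ rmorphM /= -ipC. Qed.

Lemma ip_sum (T : Type) (s : seq T) (P : pred T) (x : T -> H) z :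
  ip (\sum_(i <- s | P i) x i) z = \sum_(i <- s | P i) ip (x i) z.
Proof. by elim/big_rec2: _ => [|i a b _ <-]; rewrite ?ip0 ?ipD. Qed.

(* Project x onto z: y = x - (<x,z>/||z||^2) z is orthogonal to z. *)
Lemma norm_ip_le x z : `|ip x z| <= `|x| * `|z|.
Proof.
have [->|z_neq0] := eqVneq z 0; first by rewrite ip0r !normr0 mulr0.
set c := ip x z; set t := `|z| ^+ 2.
have t_gt0 : 0 < t by rewrite exprn_gt0 // normr_gt0.
have t_conj : t^-1^* = t^-1 by apply/CrealP; rewrite rpredV ger0_real ?ltW.
set y := x - (c / t) *: z.
have zy : ip z y = 0.
  rewrite /y ipBr ipZr ipxx -/t ipC -/c rmorphM /= t_conj.
  by rewrite -mulrA mulVf ?gt_eqF // mulr1 subrr.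
have yy : ip y y = `|x| ^+ 2 - `|c| ^+ 2 / t.
  rewrite {1}/y ipB ipZ zy mulr0 subr0 /y ipBr ipZr ipxx -/c rmorphM /= t_conj.
  by rewrite normCK [c * _]mulrC mulrAC.
have c_le : `|c| ^+ 2 <= (`|x| * `|z|) ^+ 2.
  have : 0 <= ip y y by rewrite ipxx exprn_ge0.
  by rewrite yy subr_ge0 ler_pdivrMr // exprMn.
by rewrite -(ler_pXn2r (isT : (0 < 2)%N)) ?nnegrE ?mulr_ge0.
Qed.

Lemma ip_cvgl {T : Type} {G : set_system T} {FG : Filter G} z {x : T -> H} {y} :
  x @ G --> y -> (fun t => (ip (x t) z : R[i]^o)) @ G --> (ip y z : R[i]^o).
Proof.
move=> xy; apply/cvgrPdist_lt => e e_gt0.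
have [->|z_neq0] := eqVneq z 0.
  by apply: nearW => t; rewrite !ip0r subrr normr0.
have z_gt0 : 0 < `|z| by rewrite normr_gt0.
move/cvgrPdist_lt: xy => /(_ _ (divr_gt0 e_gt0 z_gt0)).
apply: filterS => t yxt; rewrite -ipB (le_lt_trans (norm_ip_le _ _)) //.
by rewrite -ltr_pdivlMr.
Qed.

End InnerProduct.

Section ParsevalFrame.
Context {R : realType} {H : normedModType R[i]} {ip : H -> H -> R[i]}.
Context {I : choiceType} {F : I -> H}.
Hypotheses (ip_inner : is_inner_product ip) (F_parseval : parseval_frame ip F).

Lemma parseval_ip_sum_le x (A : {fset I}) :
  \sum_(i <- A) `|ip x (F i)| ^+ 2 <= `|x| ^+ 2.
Proof.
apply: (sum_over_to_ub _ _ (F_parseval x)) => [i|]; first exact: exprn_ge0.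
exact/ger0_real/exprn_ge0.
Qed.

(* Writing x for the sum, ||x||^2 = sum c_i <f_i, x>
   <= (sum |c_i|^2 + sum |<x, f_i>|^2) / 2 by AM-GM,
   and the last sum is at most ||x||^2. *)
Lemma parseval_synthesis_le (c : I -> R[i]) (P : pred I) (A : {fset I}) :
  `|\sum_(i <- A | P i) c i *: F i| ^+ 2 <= \sum_(i <- A | P i) `|c i| ^+ 2.
Proof.
set x := \sum_(i <- A | P i) _; set C := \sum_(i <- A | P i) _.
set D := \sum_(i <- A | P i) `|ip x (F i)| ^+ 2.
have D_le : D <= `|x| ^+ 2.
  apply: le_trans (parseval_ip_sum_le x A).
  by apply: ler_sum_pred => i; apply: exprn_ge0.
have x_sum : `|x| ^+ 2 = \sum_(i <- A | P i) c i * (ip x (F i))^*.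
  rewrite -(ipxx ip_inner) {1}/x (ip_sum ip_inner).
  by apply: eq_bigr => i _; rewrite (ipZ ip_inner) (ipC ip_inner x).
have x_le : `|x| ^+ 2 <= (C + D) / 2.
  rewrite -[X in X <= _]ger0_norm ?exprn_ge0 // x_sum.
  apply: le_trans (ler_norm_sum _ _ _) _.
  rewrite /C /D -big_split /= mulr_suml; apply: ler_sum => i _.
  rewrite normrM norm_conjC.
  exact: (real_leif_mean_square (normr_real _) (normr_real _)).1.
have : `|x| ^+ 2 <= (C + `|x| ^+ 2) / 2.
  by apply: le_trans x_le _; rewrite ler_pM2r // lerD2l.
by rewrite ler_pdivlMr // mulrDr mulr1 lerD2r.
Qed.

Lemma parseval_ip_complement {J : set I} {f : H} {a : R[i]} {g : H} :
  sum_over_to J (fun i => (`|ip f (F i)| ^+ 2 : R[i]^o)) a ->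
  sum_over_to (~` J) (fun i => ip f (F i) *: F i) g ->
  ip g f = `|f| ^+ 2 - a.
Proof.
move=> Ja Jg; set w := fun i => (`|ip f (F i)| ^+ 2 : R[i]^o).
have ip_partial (A : {fset I}) :
    ip (\sum_(i <- A | `[< (~` J) i >]) ip f (F i) *: F i) f =
    \sum_(i <- A | `[< [set: I] i >]) w i - \sum_(i <- A | `[< J i >]) w i.
  rewrite (ip_sum ip_inner) big_asboolT.
  rewrite [X in _ = X - _](bigID (fun i => `[< J i >])) /= addrAC subrr add0r.
  apply: eq_big => [i|i _]; first exact: asbool_neg.
  by rewrite (ipZ ip_inner) (ipC ip_inner f) -normCK.
have ip_cvg : (fun A : {fset I} =>
      (ip (\sum_(i <- A | `[< (~` J) i >]) ip f (F i) *: F i) f : R[i]^o))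
    @ fin_subsets --> (`|f| ^+ 2 - a : R[i]^o).
  by rewrite (funext ip_partial); exact: cvgB (F_parseval f) Ja.
exact: cvg_unique (@norm_hausdorff _ _) _ (fmap_proper_filter _ _) _ _
  (ip_cvgl ip_inner f Jg) ip_cvg.
Qed.

End ParsevalFrame.

(* The partial sums are Cauchy: a tail over B \ A0 has squared norm at most
   sum_{B \ A0} |c_i|^2 <= n - sum_{A0} |c_i|^2. *)
Lemma parseval_synthesis_cvg {R : realType} {H : completeNormedModType R[i]}
    {ip : H -> H -> R[i]} {I : choiceType} {F : I -> H} :
  is_inner_product ip -> parseval_frame ip F ->
  forall (c : I -> R[i]) (P : set I) (n : R[i]), 0 <= n ->
  sum_over_to [set: I] (fun i => (`|c i| ^+ 2 : R[i]^o)) n ->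
  exists g : H, sum_over_to P (fun i => c i *: F i) g.
Proof.
move=> ip_inner F_parseval c P n n_ge0 cn.
have c_ge0 i : 0 <= `|c i| ^+ 2 by apply: exprn_ge0.
have c_le := sum_over_to_ub c_ge0 (ger0_real n_ge0) cn.
pose s (A : {fset I}) := \sum_(i <- A | `[< P i >]) c i *: F i.
suff s_cvg : cvg (s @ fin_subsets) by exists (lim (s @ fin_subsets)).
apply: cauchy_cvg; apply: cauchy_exP => eps /gt0_complex_real [-> e_gt0].
set e := complex.Re _ in e_gt0 *.
have e2_gt0 : 0 < (e ^+ 2)%:C%C :> R[i] by rewrite ltcR exprn_gt0.
have /cvgrPdist_lt /(_ _ e2_gt0) /near_fin_subsets [A0 A0_near] := cn.
have := A0_near A0 (fsubset_refl _).
rewrite big_asboolT ger0_norm ?subr_ge0 // => A0_tail.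
exists (s A0), A0 => // B /= A0B.
rewrite -ball_normE /ball_ /= /s (big_fsetD_split _ _ A0B) opprD addrA subrr.
rewrite add0r normrN.
set D := [fset j in B | j \notin A0]%fset.
have D_le : \sum_(i <- D) `|c i| ^+ 2 <= n - \sum_(i <- A0) `|c i| ^+ 2.
  by rewrite lerBrDl -(big_fsetD_split _ _ A0B) c_le.
have tail_lt : `|\sum_(i <- D | `[< P i >]) c i *: F i| ^+ 2 < e%:C%C ^+ 2.
  rewrite -rmorphXn.
  apply: le_lt_trans (parseval_synthesis_le ip_inner F_parseval _ _ _) _.
  exact: le_lt_trans (ler_sum_pred c_ge0 _ _) (le_lt_trans D_le A0_tail).
by rewrite -(ltr_pXn2r (isT : (0 < 2)%N)) // nnegrE ?normr_ge0 // ler0c ltW.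
Qed.

Lemma three_quarters_sqr_le {K : numFieldType} (a y x : K) :
  0 <= a -> 0 <= y -> 0 <= x -> `|x ^+ 2 - a| <= y * x ->
  3 / 4 * x ^+ 2 <= a + y ^+ 2.
Proof.
move=> a_ge0 y_ge0 x_ge0 xay.
have [->|x_neq0] := eqVneq x 0.
  by rewrite expr0n mulr0 addr_ge0 ?exprn_ge0.
have N_gt0 : 0 < x ^+ 2 by rewrite exprn_gt0 // lt_def x_neq0.
have b_real : x ^+ 2 - a \is Num.real by rewrite rpredB ?ger0_real ?exprn_ge0.
have b_le : (x ^+ 2 - a) ^+ 2 <= y ^+ 2 * x ^+ 2.
  by rewrite -real_normK // -exprMn ler_pXn2r ?nnegrE ?mulr_ge0.
have key : x ^+ 2 * (a + y ^+ 2) - x ^+ 2 * (3 / 4 * x ^+ 2)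
    = (y ^+ 2 * x ^+ 2 - (x ^+ 2 - a) ^+ 2) + (x ^+ 2 / 2 - a) ^+ 2.
  by field.
suff : x ^+ 2 * (3 / 4 * x ^+ 2) <= x ^+ 2 * (a + y ^+ 2) by rewrite ler_pM2l.
rewrite -subr_ge0 key addr_ge0 ?subr_ge0 //.
by rewrite real_exprn_even_ge0 // rpredB ?rpredM ?rpredV ?ger0_real ?exprn_ge0.
Qed.

Theorem proposition4p1 (R : realType) (H : completeNormedModType R[i])
  (ip : H -> H -> R[i]) (I : choiceType) (F : I -> H) :
  is_inner_product ip -> parseval_frame ip F ->
  forall (J : set I) (f : H),
  exists (a : R[i]^o) (g : H),
    [/\ sum_over_to J (fun i => (`|ip f (F i)| ^+ 2 : R[i]^o)) a,
        sum_over_to (~` J) (fun i => ip f (F i) *: F i) g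
      & a + `|g| ^+ 2 >= (3 / 4) * `|f| ^+ 2].
Proof.
move=> ip_inner F_parseval J f.
have w_ge0 i : 0 <= `|ip f (F i)| ^+ 2 by apply: exprn_ge0.
have [a Ja a_ge0] : exists2 a : R[i], sum_over_to J
    (fun i => (`|ip f (F i)| ^+ 2 : R[i]^o)) a & 0 <= a.
  apply: (sum_over_to_bounded (`|f| ^+ 2) w_ge0) => A.
  apply: le_trans (parseval_ip_sum_le F_parseval f A).
  exact: ler_sum_pred.
have [g Jg] := parseval_synthesis_cvg ip_inner F_parseval
  (fun i => ip f (F i)) (~` J) _ (exprn_ge0 2 (normr_ge0 f)) (F_parseval f).
exists a, g; split => //.
apply: three_quarters_sqr_le a_ge0 (normr_ge0 g) (normr_ge0 f) _.
by rewrite -(parseval_ip_complement ip_inner F_parseval Ja Jg) norm_ip_le.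
Qed.
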